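(* Let $\mathbb{R}^m$ be endowed with an arbitrary norm $\|\cdot\|$ and let $\mathbb{R}^n$ be endowed with the $\ell_1$ norm $\|\cdot\|_1$. Then for every $A\in\mathbb{R}^{m\times n}$ with at least two different columns, \[ \mathrm{diam}(A) = \max_{u\in \mathrm{conv}(A),\; x\in \Delta_{n-1}\setminus Z(u)} \frac{2\|Ax - u\|}{\mathrm{dist}(x,Z(u))},\qquad \Phi(A) = \min_{u\in \mathrm{conv}(A),\; x\in \Delta_{n-1}\setminus Z(u)} \frac{2\|Ax - u\|}{\mathrm{dist}(x,Z(u))}. \]
   Context: $\Delta_{n-1}=\{x\in\mathbb{R}^n_+ : \sum_i x_i=1\}$. For $A\in\mathbb{R}^{m\times n}$, $A$ is also identified with the set of its columns $a_1,\dots,a_n$, and $\mathrm{conv}(A)=\{Ax: x\in\Delta_{n-1}\}$. For $u\in\mathrm{conv}(A)$, $Z(u)=\{z\in\Delta_{n-1}: Az=u\}$, and $\mathrm{dist}(x,Z(u))=\min_{z\in Z(u)}\|x-z\|_1$ (distance in the norm of $\mathbb{R}^n$). $\mathrm{diam}(A)=\sup_{u,v\in A}\|u-v\|$ (norm of $\mathbb{R}^m$). The facial distance is $\Phi(A)=\min\{\mathrm{dist}(F,\mathrm{conv}(A\setminus F)) : F \text{ a face of } \mathrm{conv}(A),\ \emptyset\neq F\neq \mathrm{conv}(A)\}$, where $A\setminus F$ is the set of columns of $A$ not in $F$ and $\mathrm{dist}(F,G)=\inf_{u\in F,w\in G}\|u-w\|$ in the norm of $\mathbb{R}^m$. *)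

From mathcomp Require Import all_boot all_order all_algebra.
From mathcomp Require Import boolp classical_sets reals.
Set Implicit Arguments. Unset Strict Implicit. Unset Printing Implicit Defensive.
Import Order.TTheory GRing.Theory Num.Theory.
Local Open Scope ring_scope.
Local Open Scope classical_set_scope.

Section Defs.
Variable R : realType.

Definition is_norm (m : nat) (N : 'cV[R]_m -> R) : Prop :=
  [/\ forall x, N x = 0 -> x = 0,
      forall (c : R) x, N (c *: x) = `|c| * N x
    & forall x y, N (x + y) <= N x + N y].

Definition l1 (n : nat) (x : 'cV[R]_n) : R := \sum_(i < n) `|x i 0|.

Definition simplex (n : nat) : set 'cV[R]_n :=
  [set x | (forall i, 0 <= x i 0) /\ \sum_(i < n) x i 0 = 1].

Definition convA (m n : nat) (A : 'M[R]_(m, n)) : set 'cV[R]_m :=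
  [set A *m x | x in @simplex n].

Definition Zset (m n : nat) (A : 'M[R]_(m, n)) (u : 'cV[R]_m) : set 'cV[R]_n :=
  [set z | @simplex n z /\ A *m z = u].

(* dist(x, Z(u)) in the l1 norm (an infimum; it is attained). *)
Definition distZ (m n : nat) (A : 'M[R]_(m, n)) (u : 'cV[R]_m) (x : 'cV[R]_n) : R :=
  inf [set l1 (x - z) | z in Zset A u].

Definition diamA (m n : nat) (N : 'cV[R]_m -> R) (A : 'M[R]_(m, n)) : R :=
  \big[Num.max/0]_(i < n) \big[Num.max/0]_(j < n) N (col i A - col j A).

Definition convex_set (m : nat) (C : set 'cV[R]_m) : Prop :=
  forall x y (t : R), C x -> C y -> 0 <= t <= 1 -> C (t *: x + (1 - t) *: y).

Definition is_face (m : nat) (C F : set 'cV[R]_m) : Prop :=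
  [/\ F `<=` C, convex_set F &
      forall x y (t : R), C x -> C y -> 0 < t < 1 ->
        F (t *: x + (1 - t) *: y) -> F x /\ F y].

Definition conv_outside (m n : nat) (A : 'M[R]_(m, n)) (F : set 'cV[R]_m)
  : set 'cV[R]_m :=
  [set A *m x | x in [set x | @simplex n x /\ forall j, F (col j A) -> x j 0 = 0]].

Definition set_dist (m : nat) (N : 'cV[R]_m -> R) (F G : set 'cV[R]_m) : R :=
  inf [set N (u - w) | u in F & w in G].

Definition facial_dist (m n : nat) (N : 'cV[R]_m -> R) (A : 'M[R]_(m, n)) : R :=
  inf [set set_dist N F (conv_outside A F) | F in
        [set F | is_face (convA A) F /\ F !=set0 /\ F != convA A]].

Definition ratios (m n : nat) (N : 'cV[R]_m -> R) (A : 'M[R]_(m, n)) : set R :=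
  [set r | exists u x, [/\ convA A u, @simplex n x, ~ Zset A u x &
             r = 2 * N (A *m x - u) / distZ A u x]].

Definition is_max (S : set R) (a : R) : Prop := S a /\ forall b, S b -> b <= a.
Definition is_min (S : set R) (a : R) : Prop := S a /\ forall b, S b -> a <= b.

End Defs.
Arguments simplex {R} n.

(* Upper bound: for x, z in the simplex, x - z = s (p - q) with p, q in the simplex
   and l1 (x - z) = 2 s; since A p - A q is a convex combination of the differences
   a_i - a_j, we get 2 ||A x - A z|| <= diam(A) l1 (x - z), with equality between
   two vertices a_i, a_j realizing diam(A).
   Lower bound: let z be the point of Z(u) nearest to x and write x - z = s (p - q)
   as above.  No column in the support of p lies in the smallest face F of conv(A)
   containing A q, for otherwise moving some mass of z towards that column would
   give a point of Z(u) closer to x.  Hence the ratio is ||A q - A p|| >=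
   dist(F, conv(A \ F)) >= Phi(A).
   Attainment of Phi(A): dist(F, conv(A \ F)) only depends on the set S of columns
   in F; it is the minimum of ||A q - A p|| over q supported on S and p supported off
   S, attained by compactness, and for such q, p we have dist(p, Z(A q)) = 2, so
   this minimum is itself one of the ratios. *)

From mathcomp Require Import all_boot all_order all_algebra.
From mathcomp Require Import boolp classical_sets reals topology normedtype derive.
From mathcomp Require Import ring lra.
Import numFieldNormedType.Exports.
Set Implicit Arguments. Unset Strict Implicit. Unset Printing Implicit Defensive.
Import Order.TTheory GRing.Theory Num.Theory.
Local Open Scope ring_scope.
Local Open Scope classical_set_scope.

Lemma lipschitz_continuous (R : realType) (V : normedModType R) (f : V -> R) (k : R) :
  (forall a b, `|f a - f b| <= k * `|a - b|) -> continuous f.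
Proof.
move=> fk x; apply/(@cvgrPdist_lt _ _ _ _ (nbhs_filter x)) => e e0.
have k1 : 0 < `|k| + 1 by rewrite ltr_wpDl.
have ek : 0 < e / (`|k| + 1) by rewrite divr_gt0.
have := @near_ball _ _ x _ ek; apply: filterS => y; rewrite -ball_normE /= => xy.
apply: le_lt_trans (fk x y) _; apply: (@le_lt_trans _ _ ((`|k| + 1) * `|x - y|)).
  by rewrite ler_wpM2r // (le_trans (ler_norm k)) // lerDl.
by rewrite mulrC -ltr_pdivlMr.
Qed.

Section RowVectorTopology.
Variables (R : realType) (n : nat).
Implicit Types (v : 'rV[R]_n) (c : 'I_n -> R).

Lemma normr_rV_entry v i : `|v 0 i| <= `|v|.
Proof.
rewrite (_ : `|v| = mx_norm v) // mx_normrE; apply/bigmax_geP; right => /=.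
by exists (0, i).
Qed.

Lemma normr_rV_le v (M : R) : 0 <= M -> (forall i, `|v 0 i| <= M) -> `|v| <= M.
Proof.
move=> M0 vM; rewrite (_ : `|v| = mx_norm v) // mx_normrE.
by apply/bigmax_leP; split => // -[i j] _ /=; rewrite (ord1 i).
Qed.

Lemma linear_form_continuous c : continuous (fun v => \sum_i c i * v 0 i).
Proof.
apply: (@lipschitz_continuous _ _ _ (\sum_i `|c i|)) => a b.
rewrite -sumrB big_distrl /=; apply: (le_trans (ler_norm_sum _ _ _)).
apply: ler_sum => i _; rewrite -mulrBr normrM ler_wpM2l //.
by have := normr_rV_entry (a - b) i; rewrite !mxE.
Qed.

Lemma closed_linear_form_eq c (b : R) :
  closed [set v : 'rV[R]_n | \sum_i c i * v 0 i = b].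
Proof.
rewrite (_ : [set v | _] = (fun v => \sum_i c i * v 0 i) @^-1` [set b]) //.
apply: preimage_closed; last exact: closed_eq.
by move=> v _; apply: linear_form_continuous.
Qed.

Lemma closed_nonneg : closed [set v : 'rV[R]_n | forall i, 0 <= v 0 i].
Proof.
have -> : [set v | forall i, 0 <= v 0 i] =
    \bigcap_(i in setT) [set v | 0 <= v 0 i] :> set 'rV[R]_n.
  by apply/seteqP; split => v /= vge0 i; [move=> _ | ]; apply: vge0.
apply: closed_bigI => i _.
apply: (@preimage_closed _ _ (fun v : 'rV[R]_n => v 0 i) [set x | 0 <= x]).
  by move=> v _; apply: coord_continuous.
exact: closed_ge.
Qed.

Lemma rV_argmin (K : set 'rV[R]_n) (f : 'rV[R]_n -> R) (b : R) :
  K !=set0 -> closed K -> (forall v, K v -> forall i, `|v 0 i| <= b) ->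
  continuous f -> exists2 c, K c & forall v, K v -> f c <= f v.
Proof.
move=> K0 Kcl Kb fc.
have Kcompact : compact K.
  apply: bounded_closed_compact => //.
  exists `|b|; split; first by rewrite num_real.
  move=> r br v Kv; apply: normr_rV_le => [|i].
    exact: le_trans (normr_ge0 b) (ltW br).
  exact: le_trans (Kb v Kv i) (le_trans (ler_norm b) (ltW br)).
have [c Kc cmin] := EVT_min_rV K0 Kcompact (continuous_subspaceT fc).
by exists c => [|v Kv]; [rewrite inE in Kc | apply: cmin; rewrite inE].
Qed.

End RowVectorTopology.

Lemma inf_ge0 (R : realType) (E : set R) : (forall x, E x -> 0 <= x) -> 0 <= inf E.
Proof.
move=> E_ge0; have [E0|E0] := pselect (E !=set0); first exact: lb_le_inf E0 E_ge0.
suff -> : E = set0 by rewrite inf0.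
by apply/seteqP; split => x // Ex; apply: E0; exists x.
Qed.

Lemma pos_neg_parts (R : realDomainType) (r : R) :
  r = Order.max r 0 - Order.max (- r) 0 /\ `|r| = Order.max r 0 + Order.max (- r) 0.
Proof.
have [r0|r0] := leP 0 r.
  by rewrite (max_r (_ : - r <= 0)) ?oppr_le0 // ger0_norm // subr0 addr0.
by rewrite (max_l (_ : 0 <= - r)) ?oppr_ge0 ?ltW // ltr0_norm // sub0r add0r opprK.
Qed.

Section NormFacts.
Variables (R : realType) (m : nat) (N : 'cV[R]_m -> R).
Hypothesis hN : is_norm N.

Lemma isnorm_eq0 x : N x = 0 -> x = 0.
Proof. by case: hN => eq0 _ _; apply: eq0. Qed.

Lemma isnormZ (c : R) x : N (c *: x) = `|c| * N x.
Proof. by case: hN => _ normZ _; apply: normZ. Qed.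

Lemma isnormD x y : N (x + y) <= N x + N y.
Proof. by case: hN => _ _ normD; apply: normD. Qed.

Lemma isnorm0 : N 0 = 0.
Proof. by rewrite -(scale0r 0) isnormZ normr0 mul0r. Qed.

Lemma isnormN x : N (- x) = N x.
Proof. by rewrite -scaleN1r isnormZ normrN normr1 mul1r. Qed.

Lemma isnorm_distC x y : N (x - y) = N (y - x).
Proof. by rewrite -isnormN opprB. Qed.

Lemma isnorm_ge0 x : 0 <= N x.
Proof. by have := isnormD x (- x); rewrite subrr isnorm0 isnormN; lra. Qed.

Lemma isnorm_sum (I : Type) (r : seq I) (P : pred I) (F : I -> 'cV[R]_m) :
  N (\sum_(i <- r | P i) F i) <= \sum_(i <- r | P i) N (F i).
Proof.
elim/big_rec2: _ => [|i y1 y2 _ ih]; first by rewrite isnorm0.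
by apply: le_trans (isnormD _ _) _; rewrite lerD2l.
Qed.

Lemma isnorm_dist_le x y : `|N x - N y| <= N (x - y).
Proof.
have hx := isnormD y (x - y); have hy := isnormD x (y - x).
rewrite addrC subrK in hx; rewrite addrC subrK isnorm_distC in hy.
by rewrite ler_norml; apply/andP; split; lra.
Qed.

End NormFacts.

Section Simplex.
Variables (R : realType) (n : nat).
Implicit Types (x y z p q : 'cV[R]_n) (t : R).

Definition vertex (j : 'I_n) : 'cV[R]_n := delta_mx j 0.

Lemma vertexE j k : vertex j k 0 = (k == j)%:R.
Proof. by rewrite mxE eqxx andbT. Qed.

Lemma simplex_vertex j : simplex n (vertex j).
Proof.
split=> [i|]; first by rewrite vertexE ler0n.
rewrite (bigD1 j) //= big1 ?addr0 => [|i /negbTE ij]; by rewrite vertexE ?eqxx ?ij.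
Qed.

Lemma simplex_ge0 x : simplex n x -> forall i, 0 <= x i 0.
Proof. by case. Qed.

Lemma simplex_sum x : simplex n x -> \sum_i x i 0 = 1.
Proof. by case. Qed.

Lemma simplex_le1 x j : simplex n x -> x j 0 <= 1.
Proof.
move=> [x0 <-]; rewrite (bigD1 j) //= lerDl.
by apply: sumr_ge0 => i _; apply: x0.
Qed.

Lemma simplex_exists_gt0 x : simplex n x -> exists j, 0 < x j 0.
Proof.
move=> [x0 sx]; apply: contrapT => /forallNP x_le0.
suff : \sum_i x i 0 <= 0 by rewrite sx ler10.
by apply: sumr_le0 => i _; rewrite leNgt; apply/negP/x_le0.
Qed.

Lemma simplex_conv x y t : simplex n x -> simplex n y -> 0 <= t <= 1 ->
  simplex n (t *: x + (1 - t) *: y).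
Proof.
move=> [x0 sx] [y0 sy] /andP[t0 t1]; split=> [i|].
  by rewrite !mxE addr_ge0 // mulr_ge0 // subr_ge0.
under eq_bigr do rewrite !mxE.
by rewrite big_split /= -!mulr_sumr sx sy !mulr1 addrC subrK.
Qed.

Lemma simplex_eq_vertex x j : simplex n x -> x j 0 = 1 -> x = vertex j.
Proof.
move=> [x0 sx] xj1.
have : \sum_(k | k != j) x k 0 == 0.
  by move: sx; rewrite (bigD1 j) //= xj1 => ?; apply/eqP; lra.
rewrite psumr_eq0 // => /allP x_eq0.
apply/matrixP => k l; rewrite (ord1 l) vertexE.
have [->|kj] := eqVneq k j; first by rewrite xj1.
by apply/eqP; have := x_eq0 k (mem_index_enum _); rewrite kj.
Qed.

Lemma simplex_split x j : simplex n x -> 0 < x j 0 < 1 ->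
  exists y, [/\ simplex n y, y j 0 = 0, (forall k, 0 < y k 0 -> 0 < x k 0) &
     x = x j 0 *: vertex j + (1 - x j 0) *: y].
Proof.
move=> [x0 sx] /andP[xj0 xj1]; set c := x j 0.
have c1 : 1 - c != 0 by rewrite subr_eq0 eq_sym lt_eqF.
pose y := (1 - c)^-1 *: (x - c *: vertex j).
have yE k : y k 0 = (1 - c)^-1 * (x k 0 - c * (k == j)%:R).
  by rewrite !mxE eqxx andbT.
have ic0 : 0 < (1 - c)^-1 by rewrite invr_gt0 subr_gt0.
exists y; split.
- split=> [k|].
    rewrite yE mulr_ge0 ?(ltW ic0) //.
    by have [->|_] := eqVneq k j; rewrite /= ?mulr1 ?subrr ?mulr0 ?subr0.
  under eq_bigr do rewrite yE.
  rewrite -mulr_sumr sumrB sx -mulr_sumr (bigD1 j) //= eqxx big1 ?addr0.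
    by rewrite mulr1 mulVf.
  by move=> k /negbTE ->.
- by rewrite yE eqxx mulr1 subrr mulr0.
- move=> k; rewrite yE; have [->|_] //= := eqVneq k j.
  by rewrite mulr0 subr0 pmulr_rgt0.
- by rewrite /y scalerA mulfV // scale1r addrC subrK.
Qed.

Lemma l1_ge0 x : 0 <= l1 x.
Proof. exact: sumr_ge0. Qed.

Lemma l1_0 : l1 (0 : 'cV[R]_n) = 0.
Proof. by rewrite /l1 big1 // => i _; rewrite mxE normr0. Qed.

Lemma l1Z (a : R) x : l1 (a *: x) = `|a| * l1 x.
Proof. by rewrite /l1 mulr_sumr; apply: eq_bigr => i _; rewrite mxE normrM. Qed.

Lemma l1_eq0 x : l1 x = 0 -> x = 0.
Proof.
move/eqP; rewrite /l1 psumr_eq0 // => /allP x0.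
apply/matrixP => i j; rewrite (ord1 j) mxE.
by apply/eqP; rewrite -normr_eq0; apply: x0; rewrite mem_index_enum.
Qed.

Lemma l1_simplex_sub p q : simplex n p -> simplex n q ->
  l1 (p - q) = 2 - 2 * \sum_k Order.min (p k 0) (q k 0).
Proof.
move=> [_ sp] [_ sq].
have dist_min (a b : R) : `|a - b| = a + b - 2 * Order.min a b.
  have [ab|ba] := leP a b; last by rewrite gtr0_norm ?subr_gt0 //; lra.
  by rewrite distrC ger0_norm ?subr_ge0 //; lra.
rewrite /l1; under eq_bigr do rewrite !mxE dist_min.
by rewrite sumrB -mulr_sumr big_split /= sp sq.
Qed.

Lemma l1_simplex_sub_le2 p q : simplex n p -> simplex n q -> l1 (p - q) <= 2.
Proof.
move=> hp hq; rewrite l1_simplex_sub // gerBl mulr_ge0 //.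
by apply: sumr_ge0 => k _; rewrite le_min !simplex_ge0.
Qed.

Lemma l1_simplex_sub_disjoint p q : simplex n p -> simplex n q ->
  (forall k, p k 0 = 0 \/ q k 0 = 0) -> l1 (p - q) = 2.
Proof.
move=> hp hq pq; rewrite l1_simplex_sub // big1 ?mulr0 ?subr0 // => k _.
by case: (pq k) => ->; [apply: min_l | apply: min_r]; apply: simplex_ge0.
Qed.

Lemma l1_simplex_sub_lt2 p q j : simplex n p -> simplex n q ->
  0 < p j 0 -> 0 < q j 0 -> l1 (p - q) < 2.
Proof.
move=> hp hq pj qj; rewrite l1_simplex_sub // gtrBl mulr_gt0 //.
rewrite (bigD1 j) //= ltr_pwDl ?lt_min ?pj ?qj //.
by apply: sumr_ge0 => k _; rewrite le_min !simplex_ge0.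
Qed.

Lemma simplex_sub_decomp x z : simplex n x -> simplex n z -> x != z ->
  exists2 s, 0 < s & exists p q, [/\ simplex n p, simplex n q,
    x - z = s *: (p - q), l1 (x - z) = 2 * s & forall k, s * q k 0 <= z k 0].
Proof.
move=> hx hz xz.
pose wp := \col_k Order.max (x k 0 - z k 0) 0.
pose wm := \col_k Order.max (- (x k 0 - z k 0)) 0.
have wp_ge0 k : 0 <= wp k 0 by rewrite mxE le_max lexx orbT.
have wm_ge0 k : 0 <= wm k 0 by rewrite mxE le_max lexx orbT.
have xz_split : x - z = wp - wm.
  by apply/matrixP => k l; rewrite (ord1 l) !mxE; apply: (pos_neg_parts _).1.
have abs_xz k : `|(x - z) k 0| = wp k 0 + wm k 0.
  by rewrite !mxE; apply: (pos_neg_parts _).2.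
set s := \sum_k wp k 0.
have sum_wm : \sum_k wm k 0 = s.
  have : \sum_k (wp k 0 - wm k 0) = 0.
    have entry k : wp k 0 - wm k 0 = x k 0 - z k 0.
      by rewrite !mxE; apply/esym/(pos_neg_parts _).1.
    by rewrite (eq_bigr _ (fun k _ => entry k)) sumrB !simplex_sum // subrr.
  by rewrite sumrB => /eqP; rewrite subr_eq0 eq_sym => /eqP.
have l1_xz : l1 (x - z) = 2 * s.
  rewrite /l1 (eq_bigr _ (fun k _ => abs_xz k)) big_split /= sum_wm.
  by rewrite mulr2n mulrDl mul1r.
have s_gt0 : 0 < s.
  rewrite lt_def sumr_ge0 ?andbT //; apply: contra xz => /eqP s0.
  by rewrite -subr_eq0; apply/eqP/l1_eq0; rewrite l1_xz s0 mulr0.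
have s0 : s != 0 by rewrite gt_eqF.
exists s => //; exists (s^-1 *: wp), (s^-1 *: wm); split => //.
- split=> [k|]; first by rewrite mxE mulr_ge0 ?wp_ge0 // invr_ge0 ltW.
  under eq_bigr do rewrite mxE.
  by rewrite -mulr_sumr mulVf.
- split=> [k|]; first by rewrite mxE mulr_ge0 ?wm_ge0 // invr_ge0 ltW.
  under eq_bigr do rewrite mxE.
  by rewrite -mulr_sumr sum_wm mulVf.
- by rewrite -scalerBr scalerA mulfV // scale1r.
- move=> k; rewrite mxE mulrA mulfV // mul1r mxE.
  by rewrite ge_max simplex_ge0 // andbT opprB lerBlDr lerDl simplex_ge0.
Qed.

End Simplex.
Arguments vertex {R n} j.
Arguments simplex_vertex {R n} j.

Section ConvexFace.
Variables (R : realType) (m : nat) (C : set 'cV[R]_m).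
Hypothesis C_convex : convex_set C.
Implicit Types (c v x y : 'cV[R]_m) (e t : R).

(* For c in C, the smallest face of C containing c: the points v of C such that
   the segment from v to c can be prolonged beyond c inside C. *)
Definition face_of c : set 'cV[R]_m :=
  [set v | C v /\ exists2 e, 0 < e & C (c + e *: (c - v))].

Lemma ray_shrink c v e1 e : C c -> C (c + e1 *: (c - v)) -> 0 < e -> e <= e1 ->
  C (c + e *: (c - v)).
Proof.
move=> Cc Ce1 e_gt0 ee1; have e1_gt0 : 0 < e1 := lt_le_trans e_gt0 ee1.
have -> : c + e *: (c - v) = (e / e1) *: (c + e1 *: (c - v)) + (1 - e / e1) *: c.
  by apply/matrixP => i j; rewrite !mxE; field; rewrite gt_eqF.
apply: C_convex => //; apply/andP; split; first by rewrite divr_ge0 // ltW.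
by rewrite ler_pdivrMr // mul1r.
Qed.

Lemma ray_of_segment c x y t e : C x -> C y -> 0 < t < 1 -> 0 < e ->
  C (c + e *: (c - (t *: x + (1 - t) *: y))) ->
  exists2 d, 0 < d & C (c + d *: (c - x)).
Proof.
move=> Cx Cy /andP[t_gt0 t_lt1] e_gt0 Cray.
have et_ge0 : 0 <= e * (1 - t) by rewrite mulr_ge0 ?(ltW e_gt0) // subr_ge0 ltW.
have den_gt0 : 0 < 1 + e * (1 - t) by rewrite ltr_wpDr.
exists (t * e / (1 + e * (1 - t))); first by rewrite divr_gt0 ?mulr_gt0.
have -> : c + (t * e / (1 + e * (1 - t))) *: (c - x) =
    (1 + e * (1 - t))^-1 *: (c + e *: (c - (t *: x + (1 - t) *: y))) +
    (1 - (1 + e * (1 - t))^-1) *: y.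
  by apply/matrixP => i j; rewrite !mxE; field; rewrite gt_eqF.
apply: C_convex => //; apply/andP; split; first by rewrite invr_ge0 ltW.
by rewrite invf_le1 // lerDl.
Qed.

Lemma face_of_self c : C c -> face_of c c.
Proof. by move=> Cc; split=> //; exists 1; rewrite ?subrr ?scaler0 ?addr0. Qed.

Lemma is_face_face_of c : C c -> is_face C (face_of c).
Proof.
move=> Cc; split.
- by move=> v [].
- move=> v1 v2 t [Cv1 [e1 e1_gt0 Ce1]] [Cv2 [e2 e2_gt0 Ce2]] t01.
  split; first exact: C_convex.
  pose e := Order.min e1 e2.
  have e_gt0 : 0 < e by rewrite lt_min e1_gt0.
  exists e => //.
  have -> : c + e *: (c - (t *: v1 + (1 - t) *: v2)) =
      t *: (c + e *: (c - v1)) + (1 - t) *: (c + e *: (c - v2)).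
    by apply/matrixP => i j; rewrite !mxE; ring.
  apply: C_convex => //.
    by apply: (ray_shrink Cc Ce1) => //; rewrite ge_min lexx.
  by apply: (ray_shrink Cc Ce2) => //; rewrite ge_min lexx orbT.
- move=> x y t Cx Cy t01 [_ [e e_gt0 Cray]]; split; split => //.
    exact: ray_of_segment Cray.
  apply: (@ray_of_segment _ _ x (1 - t) e) => //.
    by case/andP: t01 => t0 t1; rewrite subr_gt0 t1 ltrBlDr ltrDl.
  suff -> : (1 - t) *: y + (1 - (1 - t)) *: x = t *: x + (1 - t) *: y by [].
  by rewrite subKr addrC.
Qed.

End ConvexFace.

Section Polytope.
Variables (R : realType) (m n : nat) (N : 'cV[R]_m -> R) (A : 'M[R]_(m, n)).
Hypothesis hN : is_norm N.
Implicit Types (x y z p q : 'cV[R]_n) (u c : 'cV[R]_m) (F G : set 'cV[R]_m).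
Implicit Types (S : {set 'I_n}).

Lemma mulmx_sum_col x : A *m x = \sum_j x j 0 *: col j A.
Proof.
apply/matrixP => i k; rewrite !mxE summxE; apply: eq_bigr => j _.
by rewrite !mxE (ord1 k) mulrC.
Qed.

Lemma isnorm_mulmx_le (w : 'cV[R]_n) : N (A *m w) <= \sum_i `|w i 0| * N (col i A).
Proof.
rewrite mulmx_sum_col; apply: le_trans (isnorm_sum hN _ _ _) _.
by apply: ler_sum => i _; rewrite isnormZ.
Qed.

Lemma mulmx_vertex j : A *m vertex j = col j A.
Proof.
rewrite mulmx_sum_col (bigD1 j) //= big1 => [|k /negbTE kj].
  by rewrite vertexE eqxx scale1r addr0.
by rewrite vertexE kj scale0r.
Qed.

Lemma convA_col j : convA A (col j A).
Proof. by exists (vertex j); [apply: simplex_vertex | apply: mulmx_vertex]. Qed.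

Lemma convA_convex : convex_set (convA A).
Proof.
move=> _ _ t [x hx <-] [y hy <-] t01.
exists (t *: x + (1 - t) *: y); first exact: simplex_conv.
by rewrite mulmxDr !scalemxAr.
Qed.

Notation diam := (diamA N A).

Lemma diam_ge_col i j : N (col i A - col j A) <= diam.
Proof.
apply: le_trans (le_bigmax _ _ i).
exact: (le_bigmax _ (fun j => N (col i A - col j A)) j).
Qed.

Lemma diam_ge0 : 0 <= diam.
Proof. exact: bigmax_ge_id. Qed.

Lemma diam_attained (i0 : 'I_n) : exists i j, diam = N (col i A - col j A).
Proof.
pose Di i := \big[Num.max/0]_(j < n) N (col i A - col j A).
have [i ->] : exists i, diam = Di i.
  exists [arg max_(i > i0) Di i]%O.
  by apply: (@bigmax_eq_arg _ _ _ 0 i0 xpredT) => // i _; apply: bigmax_ge_id.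
exists i, [arg max_(j > i0) N (col i A - col j A)]%O.
by apply: (@bigmax_eq_arg _ _ _ 0 i0 xpredT) => // j _; apply: isnorm_ge0.
Qed.

Lemma diam_ge_conv p q : simplex n p -> simplex n q -> N (A *m p - A *m q) <= diam.
Proof.
move=> hp hq.
have Ap : A *m p = \sum_i \sum_j (p i 0 * q j 0) *: col i A.
  rewrite mulmx_sum_col; apply: eq_bigr => i _.
  by rewrite -scaler_suml -mulr_sumr (simplex_sum hq) mulr1.
have Aq : A *m q = \sum_i \sum_j (p i 0 * q j 0) *: col j A.
  rewrite exchange_big mulmx_sum_col; apply: eq_bigr => j _ /=.
  by rewrite -scaler_suml -mulr_suml (simplex_sum hp) mul1r.
have pq_ge0 i j : 0 <= p i 0 * q j 0 by rewrite mulr_ge0 ?simplex_ge0.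
rewrite Ap Aq -sumrB; apply: le_trans (isnorm_sum hN _ _ _) _.
apply: le_trans (_ : \sum_i \sum_j p i 0 * q j 0 * diam <= _).
  apply: ler_sum => i _; rewrite -sumrB; apply: le_trans (isnorm_sum hN _ _ _) _.
  apply: ler_sum => j _; rewrite -scalerBr isnormZ // ger0_norm //.
  by rewrite ler_wpM2l ?diam_ge_col.
rewrite (eq_bigr (fun i => p i 0 * diam)) => [|i _].
  by rewrite -mulr_suml (simplex_sum hp) mul1r.
by rewrite -mulr_suml -mulr_sumr (simplex_sum hq) mulr1.
Qed.

Lemma mulmx_sub_le_diam_l1 x z : simplex n x -> simplex n z ->
  2 * N (A *m x - A *m z) <= diam * l1 (x - z).
Proof.
move=> hx hz; have [<-|xz] := eqVneq x z.
  by rewrite subrr isnorm0 // mulr0 mulr_ge0 ?diam_ge0 ?l1_ge0.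
have [s s_gt0 [p [q [hp hq xzpq -> _]]]] := simplex_sub_decomp hx hz xz.
rewrite -mulmxBr xzpq -scalemxAr mulmxBr isnormZ // gtr0_norm //.
by have := diam_ge_conv hp hq; nra.
Qed.

Lemma distZ_le u x z : Zset A u z -> distZ A u x <= l1 (x - z).
Proof.
move=> hz; apply: ge_inf; last by exists z.
by exists 0 => _ [z' _ <-]; apply: l1_ge0.
Qed.

Lemma distZ_ge u x (c : R) : Zset A u !=set0 ->
  (forall z, Zset A u z -> c <= l1 (x - z)) -> c <= distZ A u x.
Proof.
move=> [z hz] hc; apply: lb_le_inf; first by exists (l1 (x - z)), z.
by move=> _ [z' hz' <-]; apply: hc.
Qed.

Lemma Zset_nearest u x : Zset A u !=set0 ->
  exists2 z, Zset A u z & forall z', Zset A u z' -> l1 (x - z) <= l1 (x - z').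
Proof.
move=> [y hy].
pose K := [set v : 'rV[R]_n | forall i, 0 <= v 0 i] `&`
  [set v | \sum_i 1 * v 0 i = 1] `&`
  \bigcap_(r in setT) [set v | \sum_i A r i * v 0 i = u r 0].
have KZ v : K v <-> Zset A u v^T.
  have sumE : \sum_i 1 * v 0 i = \sum_i v^T i 0.
    by apply: eq_bigr => i _; rewrite mul1r mxE.
  have rowE r : \sum_i A r i * v 0 i = (A *m v^T) r 0.
    by rewrite mxE; apply: eq_bigr => i _; rewrite mxE.
  split=> [[[v_ge0 v1] vA] | [[v_ge0 v1] vA]].
    split; first by split=> [i|]; [rewrite mxE | rewrite -sumE].
    by apply/matrixP => r l; rewrite (ord1 l) -rowE vA.
  split; first by split=> [i|] /=; [have := v_ge0 i; rewrite mxE | rewrite sumE].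
  by move=> r _ /=; rewrite rowE vA.
have K0 : K !=set0 by exists y^T; apply/KZ; rewrite trmxK.
have Kclosed : closed K.
  apply: closedI; first apply: closedI.
  - exact: closed_nonneg.
  - exact: closed_linear_form_eq.
  by apply: closed_bigI => r _; apply: closed_linear_form_eq.
have K_le1 v : K v -> forall i, `|v 0 i| <= 1.
  move=> /KZ [hv _] i; have := simplex_le1 i hv; have := simplex_ge0 hv i.
  by rewrite mxE => v_ge0; rewrite ger0_norm.
have l1_cont : continuous (fun v : 'rV[R]_n => l1 (x - v^T)).
  apply: (@lipschitz_continuous _ _ _ n%:R) => a b.
  rewrite /l1 -sumrB; apply: le_trans (ler_norm_sum _ _ _) _.
  apply: (@le_trans _ _ (\sum_(i < n) `|a - b|)); last first.
    by rewrite sumr_const card_ord mulr_natl.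
  apply: ler_sum => i _.
  apply: le_trans (ler_dist_dist _ _) _; rewrite !mxE.
  have -> : x i 0 - a 0 i - (x i 0 - b 0 i) = - (a 0 i - b 0 i) by lra.
  by rewrite normrN; have := normr_rV_entry (a - b) i; rewrite !mxE.
have [c Kc cmin] := rV_argmin K0 Kclosed K_le1 l1_cont.
exists c^T => [|z hz]; first exact/KZ.
by have := cmin z^T; rewrite trmxK; apply; apply/KZ; rewrite trmxK.
Qed.

Lemma distZ_nearest u x z : Zset A u z ->
  (forall z', Zset A u z' -> l1 (x - z) <= l1 (x - z')) -> distZ A u x = l1 (x - z).
Proof.
move=> hz zmin; apply/eqP; rewrite eq_le distZ_le //.
by apply: distZ_ge => //; exists z.
Qed.

Lemma ratios_dist2 x y : simplex n x -> simplex n y ->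
  (forall z, Zset A (A *m y) z -> 2 <= l1 (x - z)) ->
  ratios N A (N (A *m x - A *m y)).
Proof.
move=> hx hy far.
have dist2 : distZ A (A *m y) x = 2.
  apply/eqP; rewrite eq_le; apply/andP; split; last by apply: distZ_ge far; exists y.
  exact: le_trans (distZ_le x (_ : Zset A (A *m y) y)) (l1_simplex_sub_le2 hx hy).
exists (A *m y), x; split => //; first by exists y.
  by move=> /far; rewrite subrr l1_0; lra.
by rewrite dist2 mulrC mulKf // pnatr_eq0.
Qed.

Lemma ratio_le_diam r : ratios N A r -> r <= diam.
Proof.
move=> [_ [x [[y hy <-] hx _ ->]]].
have Zy : Zset A (A *m y) y by [].
have d_ge0 : 0 <= distZ A (A *m y) x.
  by apply: distZ_ge => [|z _]; [exists y | apply: l1_ge0].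
have [->|d_neq0] := eqVneq (distZ A (A *m y) x) 0; first by rewrite invr0 mulr0 diam_ge0.
rewrite ler_pdivrMr ?lt_def ?d_neq0 //.
have [diam0|diam_gt0] := eqVneq diam 0.
  by have := mulmx_sub_le_diam_l1 hx hy; rewrite diam0 !mul0r.
have {diam_gt0}diam_gt0 : 0 < diam by rewrite lt_def diam_gt0 diam_ge0.
rewrite [diam * _]mulrC -ler_pdivrMr //.
apply: distZ_ge => [|z [hz <-]]; first by exists y.
by rewrite ler_pdivrMr // [_ * diam]mulrC mulmx_sub_le_diam_l1.
Qed.

Lemma diam_in_ratios : (exists i j : 'I_n, col i A != col j A) -> ratios N A diam.
Proof.
move=> [i0 [j0 ij0]]; have [i [j diamE]] := diam_attained i0.
have diam_gt0 : 0 < diam.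
  apply: lt_le_trans (diam_ge_col i0 j0); rewrite lt_def isnorm_ge0 // andbT.
  by apply: contra ij0 => /eqP/(isnorm_eq0 hN)/eqP; rewrite subr_eq0.
rewrite diamE -!mulmx_vertex; apply: ratios_dist2; try exact: simplex_vertex.
move=> z [hz Az]; have := mulmx_sub_le_diam_l1 (simplex_vertex i) hz.
by rewrite Az !mulmx_vertex -diamE [diam * _]mulrC ler_pM2r.
Qed.

Lemma mulmx_vertex_conv (t : R) j y :
  A *m (t *: vertex j + (1 - t) *: y) = t *: col j A + (1 - t) *: (A *m y).
Proof. by rewrite mulmxDr -!scalemxAr mulmx_vertex. Qed.

Lemma face_col_of_pos F z j : is_face (convA A) F -> simplex n z -> F (A *m z) ->
  0 < z j 0 -> F (col j A).
Proof.
move=> [_ _ F_ext] hz Fz zj_gt0.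
have [zj1|zj_neq1] := eqVneq (z j 0) 1.
  by rewrite -mulmx_vertex -(simplex_eq_vertex hz zj1).
have zj_lt1 : z j 0 < 1 by rewrite lt_neqAle zj_neq1 simplex_le1.
have [y [hy _ _ zE]] := simplex_split hz (introT andP (conj zj_gt0 zj_lt1)).
move: Fz; rewrite zE mulmx_vertex_conv => /F_ext [] //.
- exact: convA_col.
- by exists y.
- by rewrite zj_gt0.
Qed.

Lemma convex_mulmx_of_cols F z : convex_set F -> simplex n z ->
  (forall j, 0 < z j 0 -> F (col j A)) -> F (A *m z).
Proof.
move=> F_convex; move: {-1}#|_| (leqnn #|[set k | 0 < z k 0]%SET|) => c.
elim: c z => [|c ih] z supp_z hz Fcols; have [j zj_gt0] := simplex_exists_gt0 hz.
  by move: supp_z; rewrite leqn0 => /eqP/cards0_eq/setP/(_ j); rewrite !inE zj_gt0.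
have [zj1|zj_neq1] := eqVneq (z j 0) 1.
  by rewrite (simplex_eq_vertex hz zj1) mulmx_vertex; apply: Fcols.
have zj_lt1 : z j 0 < 1 by rewrite lt_neqAle zj_neq1 simplex_le1.
have [y [hy yj0 supp_yz zE]] := simplex_split hz (introT andP (conj zj_gt0 zj_lt1)).
rewrite zE mulmx_vertex_conv; apply: F_convex; first exact: Fcols.
  apply: ih => // [|k /supp_yz]; last exact: Fcols.
  rewrite -ltnS; apply: leq_trans supp_z; apply: proper_card; apply/properP; split.
    by apply/fintype.subsetP => k; rewrite !inE => /supp_yz.
  by exists j; rewrite !inE // yj0 ltxx.
by rewrite (ltW zj_gt0) (ltW zj_lt1).
Qed.

Lemma simplex_preimage_ray c (r : 'cV[R]_n) j e : simplex n r -> 0 < e ->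
  A *m r = c + e *: (c - col j A) ->
  exists r', [/\ simplex n r', A *m r' = c & 0 < r' j 0].
Proof.
move=> hr e_gt0 Ar; have e1_gt0 : 0 < 1 + e by rewrite ltr_wpDl.
have inv_lt1 : (1 + e)^-1 < 1 by rewrite invf_lt1 // ltrDl.
exists ((1 + e)^-1 *: r + (1 - (1 + e)^-1) *: vertex j); split.
- apply: simplex_conv => //; first exact: simplex_vertex.
  by rewrite invr_ge0 (ltW e1_gt0) (ltW inv_lt1).
- rewrite mulmxDr -!scalemxAr Ar mulmx_vertex.
  by apply/matrixP => i k; rewrite !mxE; field; rewrite gt_eqF.
- rewrite !mxE !eqxx mulr1 ltr_wpDl ?subr_gt0 //.
  by rewrite mulr_ge0 ?simplex_ge0 // invr_ge0 ltW.
Qed.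

Lemma nearest_avoids_face u x z s p q j :
  simplex n x -> Zset A u z ->
  (forall z', Zset A u z' -> l1 (x - z) <= l1 (x - z')) ->
  0 < s -> simplex n p -> simplex n q -> x - z = s *: (p - q) ->
  l1 (x - z) = 2 * s -> (forall k, s * q k 0 <= z k 0) ->
  0 < p j 0 -> ~ face_of (convA A) (A *m q) (col j A).
Proof.
move=> hx [hz Az] zmin s_gt0 hp hq xzpq l1xz sq_le pj_gt0 [_ [e e_gt0 [r hr Ar]]].
(* Exchanging s q for s r' in z, where A r' = A q and r' charges j, keeps z in Z(u)
   but strictly decreases its distance to x. *)
have [r' [hr' Ar' r'j_gt0]] := simplex_preimage_ray hr e_gt0 Ar.
pose z' := z + s *: (r' - q).
have hz' : Zset A u z'.
  split; last by rewrite mulmxDr -scalemxAr mulmxBr Ar' subrr scaler0 addr0.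
  split=> [k|].
    rewrite !mxE mulrBr addrA subr_ge0 (le_trans (sq_le k)) // lerDl.
    by rewrite mulr_ge0 ?(ltW s_gt0) ?simplex_ge0.
  under eq_bigr do rewrite !mxE mulrBr.
  rewrite big_split sumrB -!mulr_sumr /= !simplex_sum //.
  by rewrite subrr addr0.
have : l1 (x - z) <= l1 (x - z') := zmin z' hz'.
have -> : x - z' = s *: (p - r').
  by rewrite opprD addrA xzpq -scalerBr opprB addrA subrK.
rewrite l1xz l1Z gtr0_norm // => le_2s.
have := l1_simplex_sub_lt2 hp hr' pj_gt0 r'j_gt0; nra.
Qed.

Definition proper_face F := is_face (convA A) F /\ F !=set0 /\ F != convA A.

Lemma set_dist_ge0 F G : 0 <= set_dist N F G.
Proof. by apply: inf_ge0 => _ [v _ [w _ <-]]; apply: isnorm_ge0. Qed.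

Lemma set_dist_le F G v w : F v -> G w -> set_dist N F G <= N (v - w).
Proof.
move=> Fv Gw; apply: ge_inf; last by exists v => //; exists w.
by exists 0 => _ [v' _ [w' _ <-]]; apply: isnorm_ge0.
Qed.

Lemma facial_dist_le F : proper_face F ->
  facial_dist N A <= set_dist N F (conv_outside A F).
Proof.
move=> hF; apply: ge_inf; last by exists F.
by exists 0 => _ [G _ <-]; apply: set_dist_ge0.
Qed.

Lemma ratio_face_witness r : ratios N A r -> exists2 F, proper_face F &
  exists v w, [/\ F v, conv_outside A F w & r = N (v - w)].
Proof.
move=> [_ [x [[y hy <-] hx xZ ->]]].
have Zy : Zset A (A *m y) !=set0 by exists y.
have [z [hz Az] zmin] := Zset_nearest x Zy.
have xz : x != z by apply/eqP => xzE; apply: xZ; rewrite xzE.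
have [s s_gt0 [p [q [hp hq xzpq l1xz sq_le]]]] := simplex_sub_decomp hx hz xz.
pose F := face_of (convA A) (A *m q).
have convA_q : convA A (A *m q) by exists q.
have avoid j : 0 < p j 0 -> ~ F (col j A).
  exact: (nearest_avoids_face hx (conj hz Az) zmin s_gt0 hp hq xzpq l1xz sq_le).
have p_out j : F (col j A) -> p j 0 = 0.
  by move=> Fj; apply/eqP; rewrite eq_le simplex_ge0 // andbT leNgt; apply/negP => /avoid.
have [j pj_gt0] := simplex_exists_gt0 hp.
exists F.
  split; first by rewrite /F; apply: is_face_face_of convA_q; apply: convA_convex.
  split; first by exists (A *m q); apply: face_of_self.
  by apply/eqP => FE; apply: (avoid j pj_gt0); rewrite FE; apply: convA_col.
exists (A *m q), (A *m p); split.
- exact: face_of_self.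
- by exists p.
rewrite (distZ_nearest (conj hz Az) zmin) l1xz -Az -mulmxBr xzpq -scalemxAr.
rewrite isnormZ // gtr0_norm // mulmxBr isnorm_distC //.
by field; rewrite gt_eqF.
Qed.

Lemma facial_dist_le_ratio r : ratios N A r -> facial_dist N A <= r.
Proof.
move=> /ratio_face_witness [F hF [v [w [Fv Fw ->]]]].
exact: le_trans (facial_dist_le hF) (set_dist_le Fv Fw).
Qed.

Definition simplex_on S : set 'cV[R]_n :=
  [set q | simplex n q /\ forall i, i \notin S -> q i 0 = 0].

Definition gap S : R :=
  inf [set N (A *m q - A *m p) | q in simplex_on S & p in simplex_on (~: S)].

Definition face_support F : {set 'I_n} := [set j | `[< F (col j A) >]].

Lemma gap_le S q p : simplex_on S q -> simplex_on (~: S) p ->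
  gap S <= N (A *m q - A *m p).
Proof.
move=> hq hp; apply: ge_inf; last by exists q => //; exists p.
by exists 0 => _ [q' _ [p' _ <-]]; apply: isnorm_ge0.
Qed.

Definition restrict S (v : 'rV[R]_n) : 'cV[R]_n := \col_i (if i \in S then v 0 i else 0).

(* Pairs (q, p) with q supported on S and p off S, encoded as the row vector
   (q + p)^T so that compactness in 'rV applies. *)
Definition split_simplex S : set 'rV[R]_n :=
  [set v | forall i, 0 <= v 0 i] `&` [set v | \sum_i (i \in S)%:R * v 0 i = 1] `&`
  [set v | \sum_i (i \in ~: S)%:R * v 0 i = 1].

Lemma restrict_split_simplex S v : split_simplex S v ->
  simplex_on S (restrict S v) /\ simplex_on (~: S) (restrict (~: S) v).
Proof.
move=> [[v_ge0 vS] vSC].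
have sum_restrict (T : {set 'I_n}) :
    \sum_i restrict T v i 0 = \sum_i (i \in T)%:R * v 0 i.
  by apply: eq_bigr => i _; rewrite mxE; case: (i \in T); rewrite ?mul1r ?mul0r.
have restrict_ge0 (T : {set 'I_n}) i : 0 <= restrict T v i 0.
  by rewrite mxE; case: ifP.
have restrict_out (T : {set 'I_n}) i : i \notin T -> restrict T v i 0 = 0.
  by rewrite mxE => /negbTE->.
by split; (split; [split; rewrite ?sum_restrict | exact: restrict_out]).
Qed.

Lemma split_simplex_pair S q p : simplex_on S q -> simplex_on (~: S) p ->
  [/\ split_simplex S (q + p)^T, restrict S (q + p)^T = q &
      restrict (~: S) (q + p)^T = p].
Proof.
move=> [[q_ge0 sq] qS] [[p_ge0 sp] pS].
have pS' i : i \in S -> p i 0 = 0 by move=> iS; apply: pS; rewrite inE iS.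
have qS' i : i \in ~: S -> q i 0 = 0 by rewrite inE; apply: qS.
split; first split; first split.
- by move=> i; rewrite !mxE addr_ge0.
- rewrite /= -[RHS]sq; apply: eq_bigr => i _; rewrite !mxE.
  rewrite mulr_natl; case: (boolP (i \in S)) => iS.
    by rewrite mulr1n pS' ?addr0.
  by rewrite mulr0n qS.
- rewrite /= -[RHS]sp; apply: eq_bigr => i _; rewrite !mxE.
  rewrite mulr_natl; case: (boolP (i \in ~: S)) => iS.
    by rewrite mulr1n qS' ?add0r.
  by rewrite mulr0n pS.
- apply/matrixP => i l; rewrite (ord1 l) !mxE.
  by case: (boolP (i \in S)) => iS; [rewrite pS' ?addr0 | rewrite qS].
- apply/matrixP => i l; rewrite (ord1 l) !mxE.
  by case: (boolP (i \in ~: S)) => iS; [rewrite qS' ?add0r | rewrite pS].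
Qed.

Lemma restrictB S a b : restrict S (a - b) = restrict S a - restrict S b.
Proof. by apply/matrixP => i j; rewrite !mxE; case: ifP; rewrite ?subr0. Qed.

Lemma normr_restrict_sub S v i : `|(restrict S v - restrict (~: S) v) i 0| = `|v 0 i|.
Proof. by rewrite !mxE inE; case: (i \in S); rewrite /= ?subr0 ?sub0r ?normrN. Qed.

Lemma gap_attained S q0 p0 : simplex_on S q0 -> simplex_on (~: S) p0 ->
  exists q p, [/\ simplex_on S q, simplex_on (~: S) p & gap S = N (A *m q - A *m p)].
Proof.
move=> hq0 hp0.
pose f v := N (A *m (restrict S v - restrict (~: S) v)).
have K0 : split_simplex S !=set0.
  by exists (q0 + p0)^T; case: (split_simplex_pair hq0 hp0).
have Kclosed : closed (split_simplex S).
  apply: closedI; first apply: closedI.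
  - exact: closed_nonneg.
  - exact: closed_linear_form_eq.
  - exact: closed_linear_form_eq.
have K_le2 v : split_simplex S v -> forall i, `|v 0 i| <= 2.
  move=> /restrict_split_simplex [[hq _] [hp _]] i.
  have -> : v 0 i = restrict S v i 0 + restrict (~: S) v i 0.
    by rewrite !mxE inE; case: (i \in S); rewrite ?addr0 ?add0r.
  rewrite ger0_norm ?addr_ge0 ?simplex_ge0 //.
  by have := simplex_le1 i hq; have := simplex_le1 i hp; lra.
have f_cont : continuous f.
  apply: (@lipschitz_continuous _ _ _ (\sum_i N (col i A))) => a b.
  apply: le_trans (isnorm_dist_le hN _ _) _.
  rewrite -mulmxBr.
  have -> : restrict S a - restrict (~: S) a - (restrict S b - restrict (~: S) b) =
      restrict S (a - b) - restrict (~: S) (a - b).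
    by rewrite !restrictB; apply/matrixP => i j; rewrite !mxE; lra.
  apply: le_trans (isnorm_mulmx_le _) _; rewrite mulr_suml; apply: ler_sum => i _.
  rewrite normr_restrict_sub mulrC ler_wpM2l ?isnorm_ge0 //.
  by have := normr_rV_entry (a - b) i; rewrite !mxE.
have [c Kc cmin] := rV_argmin K0 Kclosed K_le2 f_cont.
have [hq hp] := restrict_split_simplex Kc.
exists (restrict S c), (restrict (~: S) c); split => //.
apply/eqP; rewrite eq_le gap_le //= -mulmxBr; apply: lb_le_inf.
  by exists (N (A *m q0 - A *m p0)), q0 => //; exists p0.
move=> _ [q hq' [p hp' <-]]; have [Kqp qE pE] := split_simplex_pair hq' hp'.
by have := cmin _ Kqp; rewrite /f qE pE !mulmxBr.
Qed.

Section FaceSupport.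
Variable F : set 'cV[R]_m.
Hypothesis F_face : is_face (convA A) F.
Local Notation S := (face_support F).

Lemma face_support_on q : simplex n q -> F (A *m q) -> simplex_on S q.
Proof.
move=> hq Fq; split => // i; rewrite inE => /asboolPn Fi.
apply/eqP; rewrite eq_le simplex_ge0 // andbT leNgt; apply/negP => qi_gt0.
exact/Fi/(face_col_of_pos F_face hq Fq qi_gt0).
Qed.

Lemma outside_support_on p : simplex n p -> (forall j, F (col j A) -> p j 0 = 0) ->
  simplex_on (~: S) p.
Proof. by move=> hp p_out; split => // i; rewrite !inE negbK => /asboolP /p_out. Qed.

Lemma support_on_face q : simplex_on S q -> F (A *m q).
Proof.
move=> [hq qS]; case: F_face => _ F_convex _.
apply: convex_mulmx_of_cols => // j qj_gt0.
suff : j \in S by rewrite inE => /asboolP.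
by apply: contraTT qj_gt0 => jS; rewrite (qS j jS) ltxx.
Qed.

Lemma outside_support_conv p : simplex_on (~: S) p -> conv_outside A F (A *m p).
Proof.
move=> [hp pS]; exists p => //; split => // j Fj; apply: pS.
by rewrite !inE negbK; apply/asboolP.
Qed.

End FaceSupport.

Lemma proper_face_pair F : proper_face F ->
  exists q p, simplex_on (face_support F) q /\ simplex_on (~: face_support F) p.
Proof.
move=> [F_face [[v Fv] F_neq]].
have [k Fk] : exists k, ~ F (col k A).
  apply: contrapT => /forallNP Fcols; apply/(negP F_neq)/eqP/seteqP; split.
    by case: F_face.
  move=> _ [x hx <-]; case: F_face => _ F_convex _.
  by apply: convex_mulmx_of_cols => // j _; apply: contrapT; apply: Fcols.
have [q hq Aq] := (let: And3 F_conv _ _ := F_face in F_conv) v Fv.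
exists q, (vertex k); split; first by apply: face_support_on => //; rewrite Aq.
apply: outside_support_on => [|j Fj]; first exact: simplex_vertex.
by rewrite vertexE; case: eqP => // jk; move: Fj; rewrite jk.
Qed.

Lemma set_dist_eq_gap F : proper_face F ->
  set_dist N F (conv_outside A F) = gap (face_support F).
Proof.
move=> hF; have [F_face _] := hF; have [F_sub _ _] := F_face.
have [q0 [p0 [hq0 hp0]]] := proper_face_pair hF.
apply/eqP; rewrite eq_le; apply/andP; split.
  have [q [p [hq hp ->]]] := gap_attained hq0 hp0.
  by apply: set_dist_le => //; [apply: support_on_face | apply: outside_support_conv].
apply: lb_le_inf.
  exists (N (A *m q0 - A *m p0)), (A *m q0); first exact: support_on_face.
  by exists (A *m p0) => //; apply: outside_support_conv.
move=> _ [v Fv [_ [p [hp p_out] <-] <-]].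
have [q hq Aq] := F_sub v Fv; rewrite -Aq in Fv *.
by apply: gap_le => //; [apply: face_support_on | apply: outside_support_on].
Qed.

Lemma face_pair_ratio F q p : is_face (convA A) F ->
  simplex_on (face_support F) q -> simplex_on (~: face_support F) p ->
  ratios N A (N (A *m q - A *m p)).
Proof.
move=> F_face hq [hp p_out]; rewrite isnorm_distC //.
apply: ratios_dist2 => //; first by case: hq.
move=> z [hz Az]; rewrite l1_simplex_sub_disjoint //.
have [_ z_out] : simplex_on (face_support F) z.
  by apply: face_support_on => //; rewrite Az; apply: support_on_face.
move=> k; case: (boolP (k \in face_support F)) => kS; last by right; apply: z_out.
by left; apply: p_out; rewrite inE kS.
Qed.

Lemma facial_dist_in_ratios : (exists i j : 'I_n, col i A != col j A) ->
  ratios N A (facial_dist N A).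
Proof.
move=> two_cols.
have [F0 hF0 _] := ratio_face_witness (diam_in_ratios two_cols).
(* There are finitely many supports: pick a proper face whose support minimizes gap. *)
pose P S := `[< exists2 F, proper_face F & S = face_support F >].
have PF0 : P (face_support F0) by apply/asboolP; exists F0.
case: (Order.TotalTheory.arg_minP gap PF0) => _ /asboolP [F hF ->] Fmin.
have [q0 [p0 [hq0 hp0]]] := proper_face_pair hF.
have [q [p [hq hp gapE]]] := gap_attained hq0 hp0.
suff -> : facial_dist N A = N (A *m q - A *m p) by apply: face_pair_ratio hF.1 hq hp.
apply/eqP; rewrite eq_le -gapE; apply/andP; split.
  by rewrite -set_dist_eq_gap // facial_dist_le.
apply: lb_le_inf; first by exists (set_dist N F (conv_outside A F)), F.
move=> _ [F' hF' <-]; rewrite set_dist_eq_gap //.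
by apply: Fmin; apply/asboolP; exists F'.
Qed.

End Polytope.

Theorem proposition1 (R : realType) (m n : nat) (N : 'cV[R]_m -> R)
  (A : 'M[R]_(m, n)) :
  is_norm N ->
  (exists i j : 'I_n, col i A != col j A) ->
  is_max (ratios N A) (diamA N A) /\ is_min (ratios N A) (facial_dist N A).
Proof.
move=> hN two_cols; split; split.
- exact: diam_in_ratios.
- by move=> r; apply: ratio_le_diam.
- exact: facial_dist_in_ratios.
- by move=> r; apply: facial_dist_le_ratio.
Qed.
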